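(* Let $S$ be an entropy function for a finite set $X$, let $X'\subset X$, let $S'$ be the restriction of $S$ to subsets of $X'$, and let $f'$ be an EDF for $S'$. Then there exists an EDF $f$ for $S$ with $f(x)=f'(x)$ for all $x\in X'$.
   Context: An entropy function for a finite set $X$ is a function $S:2^X\to[0,\infty)$ with $S(\emptyset)=0$, $S(A)+S(B)\ge S(A\cap B)+S(A\cup B)$ and $S(A)+S(B)\ge S(A\setminus B)+S(B\setminus A)$ for all $A,B\subseteq X$. An entanglement distribution function (EDF) for $S$ is a function $f:X\to\mathbb R$ with $\big|\sum_{x\in A}f(x)\big|\le S(A)$ for all $A\subseteq X$. The restriction $S'$ of $S$ to $2^{X'}$ is an entropy function for $X'$. *)

From mathcomp Require Import all_boot all_order all_algebra.
From mathcomp Require Import reals.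
Set Implicit Arguments. Unset Strict Implicit. Unset Printing Implicit Defensive.
Import Order.TTheory GRing.Theory Num.Theory.
Local Open Scope ring_scope.

Definition entropy_function (R : realType) (X : finType) (S : {set X} -> R) : Prop :=
  [/\ S set0 = 0,
      (forall A, 0 <= S A),
      (forall A B, S (A :&: B) + S (A :|: B) <= S A + S B) &
      (forall A B, S (A :\: B) + S (B :\: A) <= S A + S B)].

(* EDF for the restriction of S to subsets of Y (Y = X gives an EDF for S).
   f is only relevant on Y. *)
Definition EDF_on (R : realType) (X : finType) (Y : {set X})
    (S : {set X} -> R) (f : X -> R) : Prop :=
  forall A : {set X}, A \subset Y -> `|\sum_(x in A) f x| <= S A.

Definition EDF (R : realType) (X : finType) (S : {set X} -> R) (f : X -> R) : Prop :=
  EDF_on [set: X] S f.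

From mathcomp Require Import all_boot all_order all_algebra.
From mathcomp Require Import reals.
From mathcomp Require Import lra.
Set Implicit Arguments. Unset Strict Implicit. Unset Printing Implicit Defensive.
Import Order.TTheory GRing.Theory Num.Theory.
Local Open Scope ring_scope.

(* The EDF is extended one point y at a time.  For A inside the current
   domain Y, the new value t = f(y) must satisfy
   -S(y+A) - f(A) <= t <= S(y+B) - f(B) for all A, B in Y.  Such a t exists
   since f(B) - f(A) = f(B\A) - f(A\B) <= S(B\A) + S(A\B), and the latter is
   at most S(y+A) + S(y+B) by the second entropy inequality applied to y+A
   and y+B. *)

Lemma setU1D (T : finType) (y : T) (A B : {set T}) :
  y \notin A -> (y |: A) :\: (y |: B) = A :\: B.
Proof.
move=> yA; apply/setP => x; rewrite !inE.
by case: (eqVneq x y) => [->|]; rewrite ?(negbTE yA) ?andbF.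
Qed.

Lemma sumrB_setD (V : zmodType) (T : finType) (F : T -> V) (A B : {set T}) :
  \sum_(x in A) F x - \sum_(x in B) F x =
  \sum_(x in A :\: B) F x - \sum_(x in B :\: A) F x.
Proof.
rewrite [X in X - _](big_setID B) [X in _ - X](big_setID A) setIC /=.
by rewrite opprD addrACA subrr add0r.
Qed.

Lemma exists_between (R : realDomainType) (I : finType) (P : pred I)
    (l u : I -> R) (i0 : I) :
  P i0 -> (forall i j, P i -> P j -> l i <= u j) ->
  exists t, forall i, P i -> l i <= t <= u i.
Proof.
move=> Pi0 lu; case: (arg_maxP l Pi0) => m Pm lm.
by exists (l m) => i Pi; rewrite lu ?andbT //; apply: lm.
Qed.

Section EDFExtension.
Variables (R : realType) (X : finType) (S : {set X} -> R).
Hypothesis S_setD : forall A B, S (A :\: B) + S (B :\: A) <= S A + S B.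

Lemma EDF_on_gap (Y : {set X}) (f : X -> R) (y : X) (A B : {set X}) :
  EDF_on Y S f -> y \notin Y -> A \subset Y -> B \subset Y ->
  - S (y |: A) - \sum_(x in A) f x <= S (y |: B) - \sum_(x in B) f x.
Proof.
move=> Hf yY sAY sBY.
have yA : y \notin A by apply: contra yY => /(subsetP sAY).
have yB : y \notin B by apply: contra yY => /(subsetP sBY).
suff: \sum_(x in B) f x - \sum_(x in A) f x <= S (y |: A) + S (y |: B) by lra.
rewrite sumrB_setD.
have := ler_normlW (Hf _ (subset_trans (subsetDl B A) sBY)).
have := lerNnormlW (Hf _ (subset_trans (subsetDl A B) sAY)).
have := S_setD (y |: A) (y |: B); rewrite !setU1D //.
lra.
Qed.

Lemma EDF_on_setU1 (Y : {set X}) (f : X -> R) (y : X) :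
  EDF_on Y S f -> y \notin Y ->
  exists g : X -> R, EDF_on (y |: Y) S g /\ {in Y, g =1 f}.
Proof.
move=> Hf yY.
pose l A := - S (y |: A) - \sum_(x in A) f x.
pose u A := S (y |: A) - \sum_(x in A) f x.
have [t t_between] :=
  exists_between (P := fun A : {set X} => A \subset Y) (l := l) (u := u)
    (sub0set Y) (fun _ _ => EDF_on_gap Hf yY).
pose g x := if x == y then t else f x.
have gE : {in Y, g =1 f}.
  by move=> x xY; rewrite /g ifN //; apply: contraNneq yY => <-.
have sum_gE (B : {set X}) : B \subset Y -> \sum_(x in B) g x = \sum_(x in B) f x.
  by move=> sBY; apply: eq_bigr => x /(subsetP sBY); apply: gE.
exists g; split=> // A sA.
case: (boolP (y \in A)) => yA; last first.
  by rewrite sum_gE ?Hf // -(setU1K yY) subsetD1 sA.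
have sA1 : A :\ y \subset Y by rewrite subDset.
rewrite (big_setD1 y yA) /= /g eqxx -/g sum_gE // ler_norml.
have := t_between _ sA1; rewrite /l /u setD1K //.
by move=> /andP[lo hi]; apply/andP; split; lra.
Qed.

Lemma EDF_on_extend (Y : {set X}) (f : X -> R) :
  EDF_on Y S f -> exists g : X -> R, EDF S g /\ {in Y, g =1 f}.
Proof.
move: {2}#|~: Y| (erefl #|~: Y|) => n.
elim: n Y f => [|n IHn] Y f cardY Hf.
  have Yc0 : ~: Y = set0 by apply/eqP; rewrite -cards_eq0 cardY.
  by exists f; split=> //; move: Hf; rewrite -(setCK Y) Yc0 setC0.
have [y] : exists y, y \in ~: Y by apply/set0Pn; rewrite -cards_eq0 cardY.
rewrite inE => yY.
have [g [Hg gf]] := EDF_on_setU1 Hf yY.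
have cardyY : #|~: (y |: Y)| = n.
  by move: cardY; rewrite (cardsD1 y (~: Y)) inE yY setCU setDE setIC add1n => -[].
have [h [Hh hg]] := IHn _ _ cardyY Hg.
exists h; split=> // x xY.
by rewrite hg ?gf // inE xY orbT.
Qed.

End EDFExtension.

Theorem theorem21 (R : realType) (X : finType) (S : {set X} -> R)
    (X' : {set X}) (f' : X -> R) :
  entropy_function S -> EDF_on X' S f' ->
  exists f : X -> R, EDF S f /\ (forall x, x \in X' -> f x = f' x).
Proof.
by case=> _ _ _ S_setD; apply: EDF_on_extend.
Qed.
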